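(* Let $n\ge 1$, $k\ge 1$, and let $K=\sum_{i=1}^{k-1}|i-1\rangle\langle i|$ be the $k\times k$ nilpotent Jordan block acting on $\mathbb{C}^k$ with basis $|0\rangle,\ldots,|k-1\rangle$. Let $\mathcal{S}\subseteq(\mathbb{C}^k)^{\otimes n}$ be the permutation-symmetric subspace. For $0\le j\le k-1$ define $$|E_j\rangle=\sum_{\substack{i_1,\ldots,i_n\ge 0\\ i_1+\cdots+i_n=j}}|i_1\rangle|i_2\rangle\cdots|i_n\rangle.$$ Then a vector $|\psi\rangle\in\mathcal{S}$ satisfies $K_{(1)}|\psi\rangle\in\mathcal{S}$ if and only if $|\psi\rangle=\sum_{j=0}^{k-1}\alpha_j|E_j\rangle$ for some complex numbers $\alpha_0,\ldots,\alpha_{k-1}$.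
   Context: $\mathcal{S}$ is the set of vectors in $(\mathbb{C}^k)^{\otimes n}$ invariant under all permutations of the $n$ tensor factors. $K_{(1)}$ denotes $K\otimes\mathbb{I}\otimes\cdots\otimes\mathbb{I}$ on $(\mathbb{C}^k)^{\otimes n}$. *)

From HB Require Import structures.
From mathcomp Require Import all_boot all_order all_algebra all_fingroup.
From mathcomp Require Import complex.
From mathcomp Require Import Rstruct.

Set Implicit Arguments. Unset Strict Implicit. Unset Printing Implicit Defensive.
Import Order.TTheory GRing.Theory Num.Theory.
Local Open Scope ring_scope.

Definition C : Type := complex Rdefinitions.R.

(* A vector of (C^k)^{⊗ n}: its coordinates in the product basis
   |i_1>|i_2>...|i_n>, indexed by t : 'I_n -> 'I_k (t j = i_{j+1}). *)
Definition tensor (n k : nat) : Type := {ffun 'I_n -> 'I_k} -> C.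

Definition permute_factors (n k : nat) (s : 'S_n) (psi : tensor n k) : tensor n k :=
  fun t => psi [ffun i => t ((s^-1)%g i)].

Definition in_sym (n k : nat) (psi : tensor n k) : Prop :=
  forall (s : 'S_n) (t : {ffun 'I_n -> 'I_k}), permute_factors s psi t = psi t.

(* Nilpotent Jordan block K = sum_{i=1}^{k-1} |i-1><i| : entry <a|K|b> = [b = a+1]. *)
Definition Kjordan (k : nat) : 'M[C]_k :=
  \matrix_(a < k, b < k) (if (b : nat) == a.+1 then 1 else 0).

Definition apply_first (n k : nat) (i0 : 'I_n) (M : 'M[C]_k) (psi : tensor n k)
  : tensor n k :=
  fun t => \sum_(b < k) M (t i0) b * psi [ffun i => if i == i0 then b else t i].

Definition E_vec (n k : nat) (j : nat) : tensor n k :=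
  fun t => if (\sum_(i < n) (t i : nat))%N == j then 1 else 0.

From HB Require Import structures.
From mathcomp Require Import all_boot all_order all_algebra all_fingroup.
From mathcomp Require Import complex.
From mathcomp Require Import Rstruct.
From mathcomp Require Import zify.
Import GRing.Theory Num.Theory.
Local Open Scope ring_scope.

(* In coordinates, (K_(1) psi)(t) is psi at t with one more unit in the first
   factor (or 0 if that overflows).  Comparing it with its image under the
   transposition of the first factor and factor i shows that psi is unchanged
   when a unit is moved from factor i to the first factor, and vanishes when
   the first factor is already full.  By induction on the weight outside the
   first factor, psi(t) then depends only on the weight i_1 + ... + i_n of t
   and vanishes from weight k on, i.e. psi is a combination of the E_j.  Conversely (K_(1) psi)(t) is then a function of
   the weight of t, hence symmetric. *)

Set Implicit Arguments.

Section Coordinates.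

Variables n k : nat.
Implicit Types (t : {ffun 'I_n -> 'I_k}) (i j : 'I_n).

Definition weight t : nat := (\sum_i (t i : nat))%N.

Definition upd t i (b : 'I_k) : {ffun 'I_n -> 'I_k} :=
  [ffun j => if j == i then b else t j].

Lemma upd_same t i b : upd t i b i = b.
Proof. by rewrite ffunE eqxx. Qed.

Lemma upd_other t i j b : j != i -> upd t i b j = t j.
Proof. by rewrite ffunE => /negbTE->. Qed.

Lemma weight_upd t i b : (weight (upd t i b) + t i = weight t + b)%N.
Proof.
rewrite /weight (bigD1 i) //= [in RHS](bigD1 i) //= upd_same.
under eq_bigr => j ji do rewrite upd_other //.
lia.
Qed.

Lemma leq_weight t i : (t i <= weight t)%N.
Proof. by rewrite /weight (bigD1 i) //= leq_addr. Qed.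

Lemma leq_weight2 t i j : i != j -> (t i + t j <= weight t)%N.
Proof.
move=> ij; rewrite /weight (bigD1 i) // (bigD1 j) 1?eq_sym //= addnA.
exact: leq_addr.
Qed.

Lemma weight_perm t (s : 'S_n) : weight [ffun i => t (s i)] = weight t.
Proof.
rewrite /weight [RHS](reindex_inj (@perm_inj _ s)).
by apply: eq_bigr => i _; rewrite ffunE.
Qed.

End Coordinates.

Section Jordan.

Variables n k' : nat.
Local Notation k := k'.+1.
Implicit Types (t : {ffun 'I_n -> 'I_k}) (i j : 'I_n) (psi : tensor n k).

Lemma apply_first_KjordanE i0 psi t :
  apply_first i0 (Kjordan k) psi t =
  if ((t i0).+1 < k)%N then psi (upd t i0 (inord (t i0).+1)) else 0.
Proof.
rewrite /apply_first; under eq_bigr => b _ do rewrite mxE.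
case: ifP => [lt_k | ge_k].
- rewrite (bigD1 (inord (t i0).+1)) //= inordK // eqxx mul1r big1 ?addr0 //.
  move=> b /negbTE b_ne; rewrite ifN ?mul0r //; apply: contraFN b_ne => /eqP eb.
  by apply/eqP/val_inj; rewrite /= inordK // eb.
- apply: big1 => b _; case: eqP => [eb | _]; last by rewrite mul0r.
  by move: ge_k; rewrite -eb ltn_ord.
Qed.

Definition zero_ext (alpha : 'I_k -> C) (s : nat) : C :=
  if (s < k)%N then alpha (inord s) else 0.

Lemma sum_E_vecE (alpha : 'I_k -> C) t :
  \sum_(j < k) alpha j * E_vec j t = zero_ext alpha (weight t).
Proof.
rewrite /E_vec -/(weight t) /zero_ext; case: ifP => [lt_k | ge_k].
- rewrite (bigD1 (inord (weight t))) //= inordK // eqxx mulr1 big1 ?addr0 //.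
  move=> j ji; rewrite ifN ?mulr0 //; apply: contra ji => /eqP ej.
  by apply/eqP/val_inj; rewrite /= inordK.
- apply: big1 => j _; rewrite ifN ?mulr0 //; apply/negP => /eqP ej.
  by move: ge_k; rewrite ej ltn_ord.
Qed.

Lemma in_sym_weight psi (f : nat -> C) :
  (forall t, psi t = f (weight t)) -> in_sym psi.
Proof. by move=> psiE s t; rewrite /permute_factors !psiE weight_perm. Qed.

Lemma apply_first_Kjordan_weight i0 psi (alpha : 'I_k -> C) t :
  (forall t, psi t = zero_ext alpha (weight t)) ->
  apply_first i0 (Kjordan k) psi t = zero_ext alpha (weight t).+1.
Proof.
move=> psiE; rewrite apply_first_KjordanE psiE; case: ifP => [lt_k | ge_k].
  by congr zero_ext; have := weight_upd t i0 (inord (t i0).+1); rewrite inordK //; lia.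
rewrite /zero_ext ifN //; apply: contraFN ge_k => lt_k.
by apply: leq_ltn_trans lt_k; rewrite ltnS leq_weight.
Qed.

Definition move_unit t i j : {ffun 'I_n -> 'I_k} :=
  upd (upd t i (inord (t i).-1)) j (inord (t j).+1).

Lemma move_unitE t i j :
  i != j -> (0 < t i)%N -> ((t j).+1 < k)%N ->
  weight (move_unit t i j) = weight t /\ move_unit t i j j = (t j).+1 :> nat.
Proof.
move=> ij ti tj; have ti' : ((t i).-1 < k)%N by rewrite ltnW // prednK.
have w1 := weight_upd t i (inord (t i).-1).
have w2 := weight_upd (upd t i (inord (t i).-1)) j (inord (t j).+1).
rewrite upd_other 1?eq_sym // !inordK // in w1 w2.
by rewrite /move_unit upd_same inordK //; split=> //; lia.
Qed.

Section Symmetric.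

Variables (i0 : 'I_n) (psi : tensor n k).
Hypotheses (sym_psi : in_sym psi)
           (sym_Kpsi : in_sym (apply_first i0 (Kjordan k) psi)).

Lemma sym_Kjordan_shift t i :
  i != i0 -> (0 < t i)%N ->
  psi t = if ((t i0).+1 < k)%N then psi (move_unit t i i0) else 0.
Proof.
move=> ni ti; have ti' : ((t i).-1 < k)%N by rewrite ltnW // prednK.
pose t1 := upd t i (inord (t i).-1); pose s := tperm i0 i.
have t1s_i0 : [ffun j => t1 ((s^-1)%g j)] i0 = (t i).-1 :> nat.
  by rewrite ffunE tpermV tpermL upd_same inordK.
have t1s : upd [ffun j => t1 ((s^-1)%g j)] i0 (inord (t i))
           = [ffun j => t ((s^-1)%g j)].
  apply/ffunP => j; rewrite /t1 !ffunE tpermV.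
  case: (eqVneq j i0) => [-> | nj0]; first by rewrite tpermL inord_val.
  case: tpermP => [ej | _ | _ /eqP/negbTE-> //]; first by rewrite ej eqxx in nj0.
  by rewrite eq_sym (negbTE ni).
have Kt1 : apply_first i0 (Kjordan k) psi t1 = psi t.
  rewrite -(sym_Kpsi s) /permute_factors apply_first_KjordanE t1s_i0 prednK //.
  by rewrite ltn_ord t1s -(sym_psi s t).
by rewrite -Kt1 apply_first_KjordanE /t1 upd_other 1?eq_sym.
Qed.

Lemma sym_Kjordan_weight t :
  psi t = zero_ext (fun b => psi (upd [ffun=> ord0] i0 b)) (weight t).
Proof.
have [N] := ubnP (weight t - t i0); elim: N t => // N IH t /ltnSE le_mass.
case: (pickP (fun i => (i != i0) && (0 < t i)%N)) => [i /andP[ni ti] | off0].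
  have le_t := leq_weight2 t i i0 ni.
  rewrite (sym_Kjordan_shift t i ni ti); case: ifP => [lt_k | ge_k].
    have [w_move move_i0] := move_unitE t i i0 ni ti lt_k.
    by rewrite IH w_move //; lia.
  by rewrite /zero_ext ifN //; lia.
have off0_t j : j != i0 -> t j = 0%N :> nat.
  by move=> nj; move: (off0 j); rewrite nj /= lt0n => /negbFE/eqP.
have t_conc : t = upd [ffun=> ord0] i0 (t i0).
  apply/ffunP => j; case: (eqVneq j i0) => [-> | nj]; first by rewrite upd_same.
  by rewrite upd_other // ffunE; apply/val_inj; rewrite /= off0_t.
have w_conc : weight t = t i0 by rewrite /weight (bigD1 i0) //= big1 ?addn0.
by rewrite /zero_ext w_conc ltn_ord inord_val -t_conc.
Qed.

End Symmetric.

End Jordan.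

Unset Implicit Arguments.

Theorem theorem5 (n k : nat) (hn : (0 < n)%N) (hk : (0 < k)%N)
  (psi : tensor n k) :
  in_sym psi ->
  (in_sym (apply_first (Ordinal hn) (Kjordan k) psi) <->
   exists alpha : 'I_k -> C,
     forall t : {ffun 'I_n -> 'I_k},
       psi t = \sum_(j < k) alpha j * @E_vec n k j t).
Proof.
case: k hk psi => // k' _ psi sym_psi; split => [sym_Kpsi | [alpha psiE]].
  exists (fun b => psi (upd [ffun=> ord0] (Ordinal hn) b)) => t.
  by rewrite sum_E_vecE (sym_Kjordan_weight sym_psi sym_Kpsi).
have psi_w t : psi t = zero_ext alpha (weight t) by rewrite psiE sum_E_vecE.
apply: (@in_sym_weight _ _ _ (fun w => zero_ext alpha w.+1)) => t.
exact: apply_first_Kjordan_weight _ t psi_w.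
Qed.
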